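(* Let $\mathbf{T}\subset\mathbb{S}^3$ be a $\mathbb{Z}_2$-symmetric spherical tetrahedron with dihedral angles $A$, $B=E$, $C=F$, $D$ and edge lengths $l_A$, $l_B=l_E$, $l_C=l_F$, $l_D$. Put $a_+=\cos\frac{l_A+l_D}{2}$, $a_-=\cos\frac{l_A-l_D}{2}$, $b=\cos l_B$, $c=\cos l_C$, and $$\Delta^\star=(a_++a_-+b+c)(a_++a_--b-c)(a_+-a_--b+c)(a_+-a_-+b-c).$$ Then the principal parameter $u=\sqrt{c^\star_{00}c^\star_{22}/\det G^\star}$ of $\mathbf{T}$ is a positive root of the quadratic equation $$u^2+\frac{4\,(a_+a_--bc)(a_+b-a_-c)(a_+c-a_-b)}{\Delta^\star}=1.$$
   Context: A spherical tetrahedron $\mathbf{T}\subset\mathbb{S}^3\subset\mathbb{R}^4$ is the intersection of $\mathbb{S}^3$ with the cone over four linearly independent unit vectors $\mathrm{p}_0,\dots,\mathrm{p}_3$. Edge lengths $l_{ij}\in[0,\pi]$: $\cos l_{ij}=\langle\mathrm{p}_i,\mathrm{p}_j\rangle$; dihedral angles $\alpha_{ij}\in[0,\pi]$: $\cos\alpha_{ij}=-\langle\mathrm{v}_i,\mathrm{v}_j\rangle$ with $\mathrm{v}_i$ the outer unit normal of the face opposite $\mathrm{p}_i$. Notation: $l_A=l_{01}$, $l_B=l_{02}$, $l_C=l_{03}$, $l_D=l_{23}$, $l_E=l_{13}$, $l_F=l_{12}$; $A,\dots,F$ are the dihedral angles along the edges of lengths $l_A,\dots,l_F$. The edge matrix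 is $G^\star=(\langle\mathrm{p}_i,\mathrm{p}_j\rangle)_{i,j=0}^3$ and $c^\star_{ij}$ denotes its $(i,j)$-cofactor $(-1)^{i+j}\det(\text{minor})$. $\mathbf{T}$ is $\mathbb{Z}_2$-symmetric if invariant under rotation through $\pi$ about the axis through the midpoints of the edges $\mathrm{p}_0\mathrm{p}_1$ and $\mathrm{p}_2\mathrm{p}_3$ (so $l_B=l_E$, $l_C=l_F$, $B=E$, $C=F$). *)

From HB Require Import structures.
From mathcomp Require Import all_boot all_order all_algebra.
From mathcomp Require Import all_classical all_reals all_analysis.
Set Implicit Arguments. Unset Strict Implicit. Unset Printing Implicit Defensive.
Import Order.TTheory GRing.Theory Num.Theory.
Local Open Scope classical_set_scope.
Local Open Scope ring_scope.

Section SphTetra.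
Variable R : realType.

Definition dotv (x y : 'rV[R]_4) : R := (x *m y^T) 0 0.

Definition v0 : 'I_4 := inord 0.
Definition v1 : 'I_4 := inord 1.
Definition v2 : 'I_4 := inord 2.
Definition v3 : 'I_4 := inord 3.

Definition sph_tetra_data (p : 'I_4 -> 'rV[R]_4) : Prop :=
  (forall i, dotv (p i) (p i) = 1) /\ row_free (\matrix_(i < 4) p i).

Definition sph_tetra (p : 'I_4 -> 'rV[R]_4) : set 'rV[R]_4 :=
  [set x | dotv x x = 1 /\
     exists lam : 'I_4 -> R, (forall i, 0 <= lam i) /\ x = \sum_(i < 4) lam i *: p i].

(* M (acting on row vectors by x |-> x *m M) is the rotation through pi about the
   great circle S^3 ∩ span(a, b): it is orthogonal, fixes span(a,b) pointwise and
   acts as -1 on its orthogonal complement. *)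
Definition half_turn_about (M : 'M[R]_4) (a b : 'rV[R]_4) : Prop :=
  M *m M^T = 1%:M /\ a *m M = a /\ b *m M = b /\
  (forall x, dotv x a = 0 -> dotv x b = 0 -> x *m M = - x).

(* Z2-symmetry: T invariant under the rotation through pi about the axis through the
   midpoints of the edges p0p1 and p2p3 (the midpoints are the normalisations of
   p0 + p1 and p2 + p3, so the axis is S^3 ∩ span(p0 + p1, p2 + p3)). *)
Definition Z2_symmetric (p : 'I_4 -> 'rV[R]_4) : Prop :=
  exists M : 'M[R]_4, half_turn_about M (p v0 + p v1) (p v2 + p v3) /\
    (fun x => x *m M) @` sph_tetra p = sph_tetra p.

Definition edge_matrix (p : 'I_4 -> 'rV[R]_4) : 'M[R]_4 :=
  \matrix_(i < 4, j < 4) dotv (p i) (p j).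

Definition edge_len (p : 'I_4 -> 'rV[R]_4) (i j : 'I_4) : R := acos (dotv (p i) (p j)).

Definition principal_param (p : 'I_4 -> 'rV[R]_4) : R :=
  Num.sqrt (cofactor (edge_matrix p) v0 v0 * cofactor (edge_matrix p) v2 v2
            / \det (edge_matrix p)).

End SphTetra.

(** The half turn [M] fixing the Z2-symmetric tetrahedron is an isometry of
    [S^3] preserving [T], so it permutes the vertices; since it fixes no vector
    outside [span(p0 + p1, p2 + p3)], it cannot fix a vertex and must swap
    [p0 <-> p1] and [p2 <-> p3].  The edge matrix therefore depends only on
    [cos l_A, cos l_B, cos l_C, cos l_D], and both [det G] and
    [det G - c_00 c_22] factor as polynomials in these four cosines.  Rewriting
    [cos l_A + cos l_D] and [1 + cos l_A cos l_D] through the half-angle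
    quantities [a_+ a_-] and [a_+^2 + a_-^2] turns these factorizations into
    [det G = Delta] and [det G - c_00 c_22 = 4 (a_+ a_- - b c)(a_+ b - a_- c)(a_+ c - a_- b)];
    positivity of the Gram determinant and of its principal minors does the rest. *)
From HB Require Import structures.
From mathcomp Require Import all_boot all_order all_algebra.
From mathcomp Require Import all_classical all_reals all_analysis.
From mathcomp Require Import ring lra.
Import Order.TTheory GRing.Theory Num.Theory.
Local Open Scope classical_set_scope.
Local Open Scope ring_scope.

Set Implicit Arguments.
Unset Strict Implicit.
Unset Printing Implicit Defensive.

Lemma val_v0 : nat_of_ord v0 = 0%N. Proof. by rewrite /v0 inordK. Qed.
Lemma val_v1 : nat_of_ord v1 = 1%N. Proof. by rewrite /v1 inordK. Qed.
Lemma val_v2 : nat_of_ord v2 = 2%N. Proof. by rewrite /v2 inordK. Qed.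
Lemma val_v3 : nat_of_ord v3 = 3%N. Proof. by rewrite /v3 inordK. Qed.

Lemma ord4_cases (i : 'I_4) : [\/ i = v0, i = v1, i = v2 | i = v3].
Proof.
case: i => -[|[|[|[|//]]]] i4; [constructor 1|constructor 2|constructor 3|constructor 4];
  by apply: val_inj; rewrite /= ?val_v0 ?val_v1 ?val_v2 ?val_v3.
Qed.

Lemma big_ord4 (V : nmodType) (F : 'I_4 -> V) :
  \sum_i F i = F v0 + F v1 + F v2 + F v3.
Proof.
rewrite !big_ord_recl big_ord0 addr0 !addrA.
by congr (_ + _ + _ + _); congr F; apply: val_inj;
  rewrite /= ?val_v0 ?val_v1 ?val_v2 ?val_v3.
Qed.

Section InnerProduct.
Variable R : realType.
Implicit Types x y z : 'rV[R]_4.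

Lemma dotvE x y : dotv x y = \sum_k x 0 k * y 0 k.
Proof. by rewrite /dotv !mxE; apply: eq_bigr => k _; rewrite mxE. Qed.

Lemma dotvC x y : dotv x y = dotv y x.
Proof. by rewrite !dotvE; apply: eq_bigr => k _; rewrite mulrC. Qed.

Lemma dotv0l x : dotv 0 x = 0.
Proof. by rewrite /dotv mul0mx mxE. Qed.

Lemma dotvDl x y z : dotv (x + y) z = dotv x z + dotv y z.
Proof. by rewrite !dotvE -big_split; apply: eq_bigr => k _; rewrite mxE mulrDl. Qed.

Lemma dotvZl a x z : dotv (a *: x) z = a * dotv x z.
Proof. by rewrite !dotvE mulr_sumr; apply: eq_bigr => k _; rewrite mxE mulrA. Qed.

Lemma dotvNl x z : dotv (- x) z = - dotv x z.
Proof. by rewrite -scaleN1r dotvZl mulN1r. Qed.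

Lemma dotvDr x y z : dotv z (x + y) = dotv z x + dotv z y.
Proof. by rewrite dotvC dotvDl !(dotvC z). Qed.

Lemma dotvZr a x z : dotv z (a *: x) = a * dotv z x.
Proof. by rewrite dotvC dotvZl dotvC. Qed.

Lemma dotvNr x z : dotv z (- x) = - dotv z x.
Proof. by rewrite dotvC dotvNl dotvC. Qed.

Lemma dotvv_ge0 x : 0 <= dotv x x.
Proof. by rewrite dotvE; apply: sumr_ge0 => k _; rewrite -expr2 sqr_ge0. Qed.

Lemma dotvv_eq0 x : dotv x x = 0 -> x = 0.
Proof.
rewrite dotvE; under eq_bigr do rewrite -expr2.
move/psumr_eq0P => x2_eq0; apply/rowP => k; rewrite mxE.
have /eqP := x2_eq0 (fun i _ => sqr_ge0 (x 0 i)) k isT.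
by rewrite sqrf_eq0 => /eqP.
Qed.

Lemma dotv_mulmx_orthogonal (M : 'M[R]_4) x y :
  M *m M^T = 1%:M -> dotv (x *m M) (y *m M) = dotv x y.
Proof. by move=> MMT; rewrite /dotv trmx_mul mulmxA -(mulmxA x) MMT mulmx1. Qed.

Lemma dotv_unit_bound x y : dotv x x = 1 -> dotv y y = 1 -> -1 <= dotv x y <= 1.
Proof.
move=> x1 y1; have := dotvv_ge0 (x + y); have := dotvv_ge0 (x - y).
rewrite !dotvDl !dotvDr !dotvNl !dotvNr x1 y1 (dotvC y x) => ? ?.
by apply/andP; split; lra.
Qed.

Lemma orthogonal_decomposition (a b x : 'rV[R]_4) :
  (forall s t, s *: a + t *: b = 0 -> s = 0 /\ t = 0) ->
  exists s t z, x = s *: a + t *: b + z /\ dotv z a = 0 /\ dotv z b = 0.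
Proof.
move=> ab_free.
have gram_neq0 : dotv a a * dotv b b - dotv a b ^+ 2 != 0.
  apply/eqP => gram0.
  have /ab_free [bb0 _] : dotv b b *: a + (- dotv a b) *: b = 0.
    apply: dotvv_eq0; rewrite !dotvDl !dotvDr !dotvZl !dotvZr (dotvC b a).
    transitivity (dotv b b * (dotv a a * dotv b b - dotv a b ^+ 2)); first by ring.
    by rewrite gram0 mulr0.
  have /ab_free [_ /eqP] : 0 *: a + 1 *: b = 0.
    by rewrite scale0r add0r scale1r; apply: dotvv_eq0.
  by rewrite oner_eq0.
pose s := (dotv x a * dotv b b - dotv x b * dotv a b) / (dotv a a * dotv b b - dotv a b ^+ 2).
pose t := (dotv x b * dotv a a - dotv x a * dotv a b) / (dotv a a * dotv b b - dotv a b ^+ 2).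
exists s, t, (x - (s *: a + t *: b)); split; first by rewrite addrC subrK.
by split; rewrite dotvDl dotvNl dotvDl !dotvZl ?(dotvC b a) /s /t; field.
Qed.

(* A vector fixed by the half turn has no component orthogonal to its axis,
   since that component would be both fixed and negated. *)
Lemma half_turn_fixed_in_axis (M : 'M[R]_4) (a b x : 'rV[R]_4) :
  half_turn_about M a b ->
  (forall s t, s *: a + t *: b = 0 -> s = 0 /\ t = 0) ->
  x *m M = x -> exists s t, x = s *: a + t *: b.
Proof.
move=> [_ [Ma [Mb Mperp]]] ab_free Mx.
have [s [t [z [xE [za zb]]]]] := orthogonal_decomposition x ab_free.
exists s, t; suff z0 : z = 0 by rewrite xE z0 addr0.
have Mz : z *m M = z by move: Mx; rewrite xE !mulmxDl -!scalemxAl Ma Mb => /addrI.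
apply: dotvv_eq0; have := Mperp z za zb; rewrite Mz => zN.
have : dotv z z = - dotv z z by rewrite {2}zN dotvNr.
lra.
Qed.

End InnerProduct.

Section Gram.
Variables (R : realFieldType) (n : nat) (A : 'M[R]_n).
Hypothesis A_unit : A \in unitmx.

Lemma gram_det_gt0 : 0 < \det (A *m A^T).
Proof.
have detA0 : \det A != 0 by rewrite -unitfE -unitmxE.
by rewrite det_mulmx det_tr -expr2 exprn_even_gt0 //= detA0 orbT.
Qed.

(* The adjugate of [A A^T] is [det (A A^T)] times [(A^-1)^T A^-1], whose
   diagonal entries are sums of squares of entries of the invertible [A^-1]. *)
Lemma gram_cofactor_gt0 i : 0 < cofactor (A *m A^T) i i.
Proof.
pose B := invmx A.
have adjE : \adj (A *m A^T) = \det (A *m A^T) *: (B^T *m B).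
  have gram_inv : A *m A^T *m (B^T *m B) = 1%:M.
    by rewrite mulmxA -(mulmxA A) -trmx_mul mulVmx // trmx1 mulmx1 mulmxV.
  by rewrite -[LHS]mulmx1 -gram_inv mulmxA mul_adj_mx mul_scalar_mx.
have -> : cofactor (A *m A^T) i i = \det (A *m A^T) * \sum_k B k i ^+ 2.
  have := congr1 (fun M : 'M[R]_n => M i i) adjE; rewrite /= !mxE => ->.
  by congr (_ * _); apply: eq_bigr => k _; rewrite mxE expr2.
rewrite mulr_gt0 ?gram_det_gt0 // lt0r sumr_ge0 ?andbT => [|k _]; last exact: sqr_ge0.
apply/eqP => /psumr_eq0P B_col0.
have : (A *m B) i i = 0.
  rewrite !mxE big1 // => k _.
  by move/eqP: (B_col0 (fun k _ => sqr_ge0 _) k isT); rewrite sqrf_eq0 => /eqP ->; rewrite mulr0.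
by rewrite mulmxV // mxE eqxx => /eqP; rewrite oner_eq0.
Qed.

End Gram.

Section Z2Gram.
Variables (R : comNzRingType) (a b c d : R).

(* The edge matrix of a Z2-symmetric tetrahedron, with [a = cos l_A],
   [b = cos l_B], [c = cos l_C] and [d = cos l_D]. *)
Definition z2_gram : 'M[R]_4 :=
  \matrix_(i, j) nth 0 (nth [::]
    [:: [:: 1; a; b; c];
        [:: a; 1; c; b];
        [:: b; c; 1; d];
        [:: c; b; d; 1]] i) j.

Lemma det_z2_gram :
  \det z2_gram = ((1 + a) * (1 + d) - (b + c) ^+ 2) * ((1 - a) * (1 - d) - (b - c) ^+ 2).
Proof.
rewrite (expand_det_row _ ord0) !big_ord_recl big_ord0 /cofactor.
rewrite !(expand_det_row _ ord0) !big_ord_recl !big_ord0 /cofactor.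
rewrite !(expand_det_row _ ord0) !big_ord_recl !big_ord0 /cofactor !det_mx11 !mxE /bump /=.
ring.
Qed.

Lemma cofactor_z2_gram0 :
  cofactor z2_gram v0 v0 = 1 + 2 * b * c * d - b ^+ 2 - c ^+ 2 - d ^+ 2.
Proof.
rewrite /cofactor !(expand_det_row _ ord0) !big_ord_recl !big_ord0 /cofactor.
rewrite !(expand_det_row _ ord0) !big_ord_recl !big_ord0 /cofactor !det_mx11 !mxE /= /bump val_v0 /=.
ring.
Qed.

Lemma cofactor_z2_gram2 :
  cofactor z2_gram v2 v2 = 1 + 2 * a * b * c - a ^+ 2 - b ^+ 2 - c ^+ 2.
Proof.
rewrite /cofactor !(expand_det_row _ ord0) !big_ord_recl !big_ord0 /cofactor.
rewrite !(expand_det_row _ ord0) !big_ord_recl !big_ord0 /cofactor !det_mx11 !mxE /= /bump val_v2 /=.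
ring.
Qed.

Variables ap am : R.
Hypothesis ap_am_mul : 2 * (ap * am) = a + d.
Hypothesis ap_am_sqr : ap ^+ 2 + am ^+ 2 = 1 + a * d.

Lemma det_z2_gram_half :
  \det z2_gram = (ap + am + b + c) * (ap + am - b - c) * (ap - am - b + c) * (ap - am + b - c).
Proof.
rewrite det_z2_gram.
have -> : (ap + am + b + c) * (ap + am - b - c) * (ap - am - b + c) * (ap - am + b - c)
  = ((ap ^+ 2 + am ^+ 2) + 2 * (ap * am) - (b + c) ^+ 2) *
    ((ap ^+ 2 + am ^+ 2) - 2 * (ap * am) - (b - c) ^+ 2) by ring.
by rewrite ap_am_mul ap_am_sqr; ring.
Qed.

Lemma det_sub_cofactors_z2_gram_half :
  \det z2_gram - cofactor z2_gram v0 v0 * cofactor z2_gram v2 v2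
  = 4 * (ap * am - b * c) * (ap * b - am * c) * (ap * c - am * b).
Proof.
rewrite det_z2_gram cofactor_z2_gram0 cofactor_z2_gram2.
have -> : 4 * (ap * am - b * c) * (ap * b - am * c) * (ap * c - am * b)
  = (2 * (ap * am) - 2 * b * c) *
    (2 * b * c * (ap ^+ 2 + am ^+ 2) - 2 * (ap * am) * (b ^+ 2 + c ^+ 2)) by ring.
by rewrite ap_am_mul ap_am_sqr; ring.
Qed.

End Z2Gram.

Section HalfAngle.
Variables (R : realType) (x y : R).

Lemma cos_half_sum_diff_mul :
  2 * (cos ((x + y) / 2) * cos ((x - y) / 2)) = cos x + cos y.
Proof.
set u := (x + y) / 2; set v := (x - y) / 2.
have -> : x = u + v by rewrite /u /v; field.
have -> : y = u - v by rewrite /u /v; field.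
by rewrite cosD cosB; ring.
Qed.

Lemma cos_half_sum_diff_sqr :
  cos ((x + y) / 2) ^+ 2 + cos ((x - y) / 2) ^+ 2 = 1 + cos x * cos y.
Proof.
set u := (x + y) / 2; set v := (x - y) / 2.
have -> : x = u + v by rewrite /u /v; field.
have -> : y = u - v by rewrite /u /v; field.
rewrite cosD cosB.
have -> : 1 + (cos u * cos v - sin u * sin v) * (cos u * cos v + sin u * sin v)
  = 1 + cos u ^+ 2 * cos v ^+ 2 - sin u ^+ 2 * sin v ^+ 2 by ring.
by rewrite !sin2cos2; ring.
Qed.

End HalfAngle.

Section Vertices.
Variables (R : realType) (p : 'I_4 -> 'rV[R]_4).
Hypothesis p_tetra : sph_tetra_data p.

Lemma vertex_unit i : dotv (p i) (p i) = 1.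
Proof. by case: p_tetra. Qed.

Lemma sum_delta k : \sum_i (i == k)%:R *: p i = p k.
Proof.
rewrite (bigD1 k) //= eqxx scale1r big1 ?addr0 // => i /negPf ->.
by rewrite scale0r.
Qed.

Lemma vertex_coef_unique (c d : 'I_4 -> R) :
  \sum_i c i *: p i = \sum_i d i *: p i -> c =1 d.
Proof.
move=> cdE i; have [_ p_free] := p_tetra.
have : \row_j c j *m \matrix_(j < 4) p j = \row_j d j *m \matrix_(j < 4) p j.
  rewrite !mulmx_sum_row.
  under eq_bigr do rewrite rowK mxE.
  by under [RHS]eq_bigr do rewrite rowK mxE.
by move/(row_free_inj p_free)/rowP/(_ i); rewrite !mxE.
Qed.

Lemma vertex_in_tetra j : sph_tetra p (p j).
Proof.
split; first exact: vertex_unit.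
by exists (fun i => (i == j)%:R); split => [i|]; rewrite ?ler0n // sum_delta.
Qed.

(* Comparing coefficients, [\sum_k lam k * nu k l = (l == j)]: a sum of
   nonnegative terms that vanishes when [l != j]. *)
Lemma vertex_extreme j (lam : 'I_4 -> R) (nu : 'I_4 -> 'I_4 -> R) :
  (forall k, 0 <= lam k) -> (forall k l, 0 <= nu k l) ->
  p j = \sum_k lam k *: \sum_l nu k l *: p l ->
  forall k l, lam k != 0 -> l != j -> nu k l = 0.
Proof.
move=> lam_ge0 nu_ge0 pjE k l lam_k l_j.
have : \sum_k lam k * nu k l = (l == j)%:R.
  apply: (@vertex_coef_unique (fun l => \sum_k lam k * nu k l) (fun l => (l == j)%:R)).
  rewrite sum_delta pjE; under eq_bigr do rewrite scaler_suml.
  rewrite exchange_big; apply: eq_bigr => k' _.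
  by rewrite scaler_sumr; apply: eq_bigr => l' _; rewrite scalerA.
rewrite (negPf l_j) => /(psumr_eq0P (fun k _ => mulr_ge0 (lam_ge0 k) (nu_ge0 k l))).
by move/(_ k isT)/eqP; rewrite mulf_eq0 (negPf lam_k) => /eqP.
Qed.

Lemma sph_tetra_isometry_vertex (M : 'M[R]_4) :
  M *m M^T = 1%:M -> (fun x => x *m M) @` sph_tetra p = sph_tetra p ->
  forall j, exists k, p j *m M = p k.
Proof.
move=> MMT MT j.
have MTM : M^T *m M = 1%:M := mulmx1C MMT.
have inT x : sph_tetra p x -> sph_tetra p (x *m M) by move=> Tx; rewrite -MT; exists x.
have inT' x : sph_tetra p x -> sph_tetra p (x *m M^T).
  by rewrite -{1}MT => -[y Ty <-]; rewrite -mulmxA MMT mulmx1.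
have [_ [lam [lam_ge0 pjME]]] := inT _ (vertex_in_tetra j).
have /choice [nu nuE] : forall k, exists nu : 'I_4 -> R,
    (forall l, 0 <= nu l) /\ p k *m M^T = \sum_l nu l *: p l.
  by move=> k; have [_ [nu nuE]] := inT' _ (vertex_in_tetra k); exists nu.
have pjE : p j = \sum_k lam k *: \sum_l nu k l *: p l.
  transitivity (p j *m M *m M^T); first by rewrite -mulmxA MMT mulmx1.
  by rewrite pjME mulmx_suml; apply: eq_bigr => k _; rewrite -scalemxAl (proj2 (nuE k)).
have [k lam_k] : exists k, lam k != 0.
  apply/existsP; apply: contraT; rewrite negb_exists => /forallP lam0.
  have : p j = 0.
    by rewrite pjE big1 // => k _; move: (lam0 k); rewrite negbK => /eqP ->; rewrite scale0r.
  by move/(congr1 (fun x => dotv x x))/eqP; rewrite vertex_unit dotv0l oner_eq0.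
have pkE : p k *m M^T = nu k j *: p j.
  rewrite (proj2 (nuE k)) (bigD1 j) //= big1 ?addr0 // => l l_j.
  by rewrite (vertex_extreme lam_ge0 (fun k => proj1 (nuE k)) pjE lam_k l_j) scale0r.
have nu1 : nu k j = 1.
  have [+ _] := inT' _ (vertex_in_tetra k).
  rewrite pkE dotvZl dotvZr vertex_unit mulr1 => nu2.
  by have := proj1 (nuE k) j; nra.
by exists k; rewrite -[p k]mulmx1 -MTM mulmxA pkE nu1 scale1r.
Qed.

Lemma vertex_pair_sum_inj a b x y : x != y -> p a + p b = p x + p y ->
  (a = x /\ b = y) \/ (a = y /\ b = x).
Proof.
move=> xy abE.
have pairE u v : \sum_i ((i == u)%:R + (i == v)%:R) *: p i = p u + p v.
  by rewrite -(sum_delta u) -(sum_delta v) -big_split; apply: eq_bigr => i _; rewrite scalerDl.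
have coefE i : ((i == a) + (i == b) = (i == x) + (i == y))%N.
  apply/eqP; rewrite -(eqr_nat R) !natrD; apply/eqP.
  apply: (@vertex_coef_unique (fun i => (i == a)%:R + (i == b)%:R)
    (fun i => (i == x)%:R + (i == y)%:R)).
  by rewrite !pairE.
have yx : (y == x) = false by rewrite eq_sym (negPf xy).
case: (eqVneq a x) => [ax | ax].
  by left; split => //; have := coefE y; rewrite ax yx eqxx /=; case: (eqVneq y b).
right; have := coefE a; rewrite eqxx eq_sym (negPf ax).
case: (eqVneq a y) => [ay _ | ay]; last by case: (a == b).
by split => //; have := coefE x; rewrite ay eq_sym yx eqxx /=; case: (eqVneq x b).
Qed.

Lemma half_turn_axis_combination s t :
  s *: (p v0 + p v1) + t *: (p v2 + p v3) =
  \sum_i (if (val i < 2)%N then s else t) *: p i.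
Proof. by rewrite big_ord4 /= val_v0 val_v1 val_v2 val_v3 /= !scalerDr !addrA. Qed.

Lemma half_turn_axis_free s t :
  s *: (p v0 + p v1) + t *: (p v2 + p v3) = 0 -> s = 0 /\ t = 0.
Proof.
move=> st0.
have coef0 : (fun i : 'I_4 => if (val i < 2)%N then s else t) =1 (fun=> 0).
  apply: vertex_coef_unique; rewrite -half_turn_axis_combination st0.
  by rewrite big1 // => i _; rewrite scale0r.
by have := coef0 v0; have := coef0 v2; rewrite /= val_v0 val_v2 /= => -> ->.
Qed.

Lemma half_turn_fixes_no_vertex (M : 'M[R]_4) j :
  half_turn_about M (p v0 + p v1) (p v2 + p v3) -> p j *m M != p j.
Proof.
move=> hM; apply/eqP => /(half_turn_fixed_in_axis hM half_turn_axis_free) [s [t pjE]].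
have coefE : (fun i => (i == j)%:R) =1 (fun i => if (val i < 2)%N then s else t).
  by apply: vertex_coef_unique; rewrite sum_delta -half_turn_axis_combination.
have e01 : (v0 == j)%:R = (v1 == j)%:R :> R by rewrite !coefE /= val_v0 val_v1.
have e23 : (v2 == j)%:R = (v3 == j)%:R :> R by rewrite !coefE /= val_v2 val_v3.
move: e01 e23; case: (ord4_cases j) => -> /eqP + /eqP;
  by rewrite -!val_eqE /= ?val_v0 ?val_v1 ?val_v2 ?val_v3 !eqr_nat.
Qed.

Lemma z2_symmetric_swap : Z2_symmetric p ->
  exists2 M : 'M[R]_4, M *m M^T = 1%:M &
    [/\ p v0 *m M = p v1, p v1 *m M = p v0, p v2 *m M = p v3 & p v3 *m M = p v2].
Proof.
move=> [M [hM MT]]; have [MMT [M01 [M23 _]]] := hM.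
exists M => //.
have [k0 E0] := sph_tetra_isometry_vertex MMT MT v0.
have [k1 E1] := sph_tetra_isometry_vertex MMT MT v1.
have [k2 E2] := sph_tetra_isometry_vertex MMT MT v2.
have [k3 E3] := sph_tetra_isometry_vertex MMT MT v3.
have v01 : v0 != v1 by rewrite -val_eqE /= val_v0 val_v1.
have v23 : v2 != v3 by rewrite -val_eqE /= val_v2 val_v3.
have fix_free j : p j *m M <> p j by apply/eqP; exact: half_turn_fixes_no_vertex.
have P01 : p k0 + p k1 = p v0 + p v1 by rewrite -E0 -E1 -mulmxDl M01.
have P23 : p k2 + p k3 = p v2 + p v3 by rewrite -E2 -E3 -mulmxDl M23.
have [[k0E _]|[k0E k1E]] := vertex_pair_sum_inj v01 P01.
  by case: (fix_free v0); rewrite E0 k0E.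
have [[k2E _]|[k2E k3E]] := vertex_pair_sum_inj v23 P23.
  by case: (fix_free v2); rewrite E2 k2E.
by split; rewrite ?E0 ?E1 ?E2 ?E3 ?k0E ?k1E ?k2E ?k3E.
Qed.

Lemma z2_symmetric_dotv : Z2_symmetric p ->
  dotv (p v1) (p v2) = dotv (p v0) (p v3) /\ dotv (p v1) (p v3) = dotv (p v0) (p v2).
Proof.
move=> /z2_symmetric_swap [M MMT [M01 M10 M23 M32]].
by split; rewrite -(dotv_mulmx_orthogonal _ _ MMT) ?M01 ?M10 ?M23 ?M32.
Qed.

Lemma edge_matrix_gram :
  edge_matrix p = \matrix_(i < 4) p i *m (\matrix_(i < 4) p i)^T.
Proof.
apply/matrixP => i j; rewrite !mxE dotvE.
by apply: eq_bigr => k _; rewrite !mxE.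
Qed.

Lemma cos_edge_len i j : cos (edge_len p i j) = dotv (p i) (p j).
Proof.
rewrite /edge_len acosK // in_itv /=.
exact: dotv_unit_bound (vertex_unit i) (vertex_unit j).
Qed.

Lemma z2_symmetric_edge_matrix : Z2_symmetric p ->
  edge_matrix p = z2_gram (dotv (p v0) (p v1)) (dotv (p v0) (p v2))
                          (dotv (p v0) (p v3)) (dotv (p v2) (p v3)).
Proof.
move=> /z2_symmetric_dotv [d12 d13].
apply/matrixP => i j; rewrite !mxE.
case: (ord4_cases i) => ->; case: (ord4_cases j) => ->;
  rewrite ?val_v0 ?val_v1 ?val_v2 ?val_v3 /=;
  by rewrite ?vertex_unit ?d12 ?d13 // dotvC ?d12 ?d13.
Qed.

End Vertices.

Theorem lemma2 (R : realType) (p : 'I_4 -> 'rV[R]_4) :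
  sph_tetra_data p -> Z2_symmetric p ->
  let lA := edge_len p v0 v1 in
  let lB := edge_len p v0 v2 in
  let lC := edge_len p v0 v3 in
  let lD := edge_len p v2 v3 in
  let ap := cos ((lA + lD) / 2) in
  let am := cos ((lA - lD) / 2) in
  let b := cos lB in
  let c := cos lC in
  let Delta := (ap + am + b + c) * (ap + am - b - c) * (ap - am - b + c) * (ap - am + b - c) in
  let u := principal_param p in
  0 < u /\
  u ^+ 2 + 4 * (ap * am - b * c) * (ap * b - am * c) * (ap * c - am * b) / Delta = 1.
Proof.
move=> p_tetra p_z2 lA lB lC lD ap am b c Delta u.
set G := z2_gram (cos lA) b c (cos lD).
have G_edge : edge_matrix p = G.
  by rewrite /G /b /c /lA /lB /lC /lD !(cos_edge_len p_tetra); exact: z2_symmetric_edge_matrix.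
have P_unit : \matrix_(i < 4) p i \in unitmx by rewrite -row_free_unit; case: p_tetra.
have det_gt0 : 0 < \det G by rewrite -G_edge edge_matrix_gram; exact: gram_det_gt0.
have cof_gt0 i : 0 < cofactor G i i.
  by rewrite -G_edge edge_matrix_gram; exact: gram_cofactor_gt0.
have ap_am_mul : 2 * (ap * am) = cos lA + cos lD := cos_half_sum_diff_mul lA lD.
have ap_am_sqr : ap ^+ 2 + am ^+ 2 = 1 + cos lA * cos lD := cos_half_sum_diff_sqr lA lD.
have DeltaE : Delta = \det G by rewrite (det_z2_gram_half b c ap_am_mul ap_am_sqr).
have u2E : u ^+ 2 = cofactor G v0 v0 * cofactor G v2 v2 / \det G.
  by rewrite /u /principal_param G_edge sqr_sqrtr // ltW // divr_gt0 // mulr_gt0.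
split; first by rewrite /u /principal_param G_edge sqrtr_gt0 divr_gt0 // mulr_gt0.
have det_neq0 : \det G != 0 := lt0r_neq0 det_gt0.
rewrite u2E -(det_sub_cofactors_z2_gram_half b c ap_am_mul ap_am_sqr) DeltaE.
by field.
Qed.
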